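(* Let $c>0$, $f>0$, $d\in\mathbb R$ and $n\ge 1$. Let $\eta$ be a real function that is continuously differentiable on a neighbourhood of $0$ in $H^2$, with $\eta$ and $\partial_t\eta$ bounded there. Define, for $v>0$, $$\chi(t,v)=\frac{c}{v}\exp\!\Big(-\frac{f}{v^{2}}\,(t+d\,v^n)^2\Big)+\eta(t,v),$$ and $\chi(t,0)=\eta(t,0)$ for $t\neq0$. Then there exist $\omega>0$ and a sufficiently small $\mathcal U$ such that $\chi\in\Psi_1^\omega(\mathcal U)$, where the function $\nu(t)$ in condition 2 of the definition can be chosen such that $\nu(t)^{-1}\to 0$ as $|t|\to 0$.
   Context: Let $H^2=\{(t,v)\in\mathbb R^2: v\ge 0\}$. $\mathcal U\subseteq H^2$ denotes the intersection of an open neighbourhood of $0\in\mathbb R^2$ with $H^2$, and $\mathcal U^*=\mathcal U\setminus\{0\}$. For $\omega>0$, $\Psi_1^\omega(\mathcal U)$ denotes the set of continuous real-valued functions $\chi$ on $\mathcal U^*$ such that: 1. $\chi$ is continuously differentiable on $\{(t,v)\in\mathcal U^*: v\neq 0\}$; 2. there is a function $t\mapsto\nu(t)>0$ (defined for $t\neq 0$) such that $|\chi(t,v)|\le\omega$ for all $(t,v)\in\mathcal U^*$ with $0\le v<|t|/\nu(t)$; 3. there are positive constants $c,K_1,K_2,\epsilon$ such that for all $(t,v)\in\mathcal U^*$ with $v\neq 0$: $\left|\chi(0,v)-\frac{c}{v}\right|<\frac{K_1}{v^{1-\epsilon}}$ (whenever $(0,v)\in\mathcal U^*$) and $\left|\frac{\partial}{\partial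 t}\chi(t,v)\right|<\frac{K_2}{v^2}$. (The constant $c$ in condition 3 is any positive constant, not necessarily the $c$ in the formula for $\chi$. Interpretation: $v=L^{-D}$, $t=(T-T_c(\infty))/T_c(\infty)$ measures the distance to the infinite-volume transition point, and the peak location converges as $|T_c(L)-T_c(\infty)|\le C L^{-m}$ with $m=nD\ge D$.) *)

From Stdlib Require Import Reals.
From Coquelicot Require Import Coquelicot.
Open Scope R_scope.

Definition open2 (O : R -> R -> Prop) : Prop :=
  forall t v, O t v -> exists r, 0 < r /\
    forall t' v', Rabs (t' - t) < r -> Rabs (v' - v) < r -> O t' v'.

Definition H2 (t v : R) : Prop := 0 <= v.

Definition is_U (U : R -> R -> Prop) : Prop :=
  exists O, open2 O /\ O 0 0 /\ forall t v, U t v <-> (O t v /\ H2 t v).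

Definition Ustar (U : R -> R -> Prop) (t v : R) : Prop :=
  U t v /\ ~ (t = 0 /\ v = 0).

Definition cont2_at (g : R -> R -> R) (t v : R) : Prop :=
  forall eps, 0 < eps -> exists delta, 0 < delta /\
    forall t' v', Rabs (t' - t) < delta -> Rabs (v' - v) < delta ->
      Rabs (g t' v' - g t v) < eps.

Definition cont_on (S : R -> R -> Prop) (g : R -> R -> R) : Prop :=
  forall t v, S t v -> forall eps, 0 < eps -> exists delta, 0 < delta /\
    forall t' v', S t' v' -> Rabs (t' - t) < delta -> Rabs (v' - v) < delta ->
      Rabs (g t' v' - g t v) < eps.

Definition dt (g : R -> R -> R) (t v : R) : R := Derive (fun x => g x v) t.
Definition dv (g : R -> R -> R) (t v : R) : R := Derive (fun y => g t y) v.

Definition C1_on (S : R -> R -> Prop) (g : R -> R -> R) : Prop :=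
  forall t v, S t v ->
    ex_derive (fun x => g x v) t /\ ex_derive (fun y => g t y) v /\
    cont2_at (dt g) t v /\ cont2_at (dv g) t v.

(* The class Psi_1^omega(U), with the function nu of condition 2 exposed. *)
Definition Psi1_with (omega : R) (U : R -> R -> Prop) (chi : R -> R -> R)
    (nu : R -> R) : Prop :=
  cont_on (Ustar U) chi /\
  C1_on (fun t v => Ustar U t v /\ v <> 0) chi /\
  (forall t, t <> 0 -> 0 < nu t) /\
  (forall t v, Ustar U t v -> t <> 0 -> 0 <= v -> v < Rabs t / nu t ->
     Rabs (chi t v) <= omega) /\
  (exists c K1 K2 eps, 0 < c /\ 0 < K1 /\ 0 < K2 /\ 0 < eps /\
     forall t v, Ustar U t v -> v <> 0 ->
       (Ustar U 0 v -> Rabs (chi 0 v - c / v) < K1 / Rpower v (1 - eps)) /\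
       Rabs (dt chi t v) < K2 / v ^ 2).

Definition Psi1 (omega : R) (U : R -> R -> Prop) (chi : R -> R -> R) : Prop :=
  exists nu, Psi1_with omega U chi nu.

(* The function chi of the statement: for v > 0 the Gaussian peak plus eta,
   and eta(t,0) on the boundary (values for v < 0 are irrelevant). *)
Definition chi_of (c f d n : R) (eta : R -> R -> R) (t v : R) : R :=
  if Rlt_dec 0 v then
    c / v * exp (- (f / v ^ 2) * (t + d * Rpower v n) ^ 2) + eta t v
  else eta t v.

From Stdlib Require Import Reals Lra.
From Coquelicot Require Import Coquelicot.
Open Scope R_scope.

(** For [v > 0] we have [chi = G + eta] with the Gaussian peak
    [G(t,v) = c/v exp(-f (t + d v^n)^2 / v^2)], so continuity and the C^1 property off
    the boundary come from those of [G] and [eta].  The inequality [e^(-y) <= 1/y] gives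
    [G(t,v) <= 4 c v / (f a^2)] as soon as the ridge [t = - d v^n] is at distance at least
    [a/2] from [t].  With [a] of order [|t|] this yields continuity at the boundary points
    [(t,0)], [t <> 0], and boundedness of [chi] below [v = |t| / nu(t) = t^2 / (1 + 2|d|)],
    where [1/nu(t) -> 0].  Similarly [e^(-y) (1 + y) <= 1] gives [|d_t G| <= 2c(f+1)/v^2].
    On the axis, [G(0,v) = c/v exp(-f d^2 v^(2n-2))] is exactly [c e^(-f d^2) / v] if
    [n = 1] and [c/v + O(v^(2n-3))] if [n > 1]. *)

Lemma cont2_at_iff g t v : cont2_at g t v <-> continuity_2d_pt g t v.
Proof.
  split.
  - intros H [eps Heps]. destruct (H eps Heps) as [delta [Hdelta Hball]].
    exists (mkposreal delta Hdelta). exact Hball.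
  - intros H eps Heps. destruct (H (mkposreal eps Heps)) as [[delta Hdelta] Hball].
    exists delta. split; assumption.
Qed.

Lemma continuity_pt_ex_derive h x : ex_derive h x -> continuity_pt h x.
Proof. intros H. apply continuity_pt_filterlim. exact (ex_derive_continuous h x H). Qed.

Lemma continuity_2d_pt_pow g t v k : continuity_2d_pt g t v ->
  continuity_2d_pt (fun a b => g a b ^ k) t v.
Proof.
  intros H. induction k as [|k IHk]; simpl.
  - apply continuity_2d_pt_const.
  - apply continuity_2d_pt_mult; assumption.
Qed.

Lemma continuity_2d_pt_exp g t v : continuity_2d_pt g t v ->
  continuity_2d_pt (fun a b => exp (g a b)) t v.
Proof.
  intros H. apply continuity_1d_2d_pt_comp; [|exact H].
  apply continuity_pt_ex_derive. auto_derive. exact I.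
Qed.

Lemma continuity_2d_pt_ln g t v : continuity_2d_pt g t v -> 0 < g t v ->
  continuity_2d_pt (fun a b => ln (g a b)) t v.
Proof.
  intros H Hpos. apply continuity_1d_2d_pt_comp; [|exact H].
  apply continuity_pt_ex_derive. auto_derive. exact Hpos.
Qed.

Ltac continuity_2d := repeat first
  [ apply continuity_2d_pt_const
  | apply continuity_2d_pt_id1
  | apply continuity_2d_pt_id2
  | apply continuity_2d_pt_plus
  | apply continuity_2d_pt_minus
  | apply continuity_2d_pt_mult
  | apply continuity_2d_pt_opp
  | apply continuity_2d_pt_inv
  | apply continuity_2d_pt_pow
  | apply continuity_2d_pt_exp
  | apply continuity_2d_pt_ln ].

Lemma Rabs_sub_le_of_Derive_bound (h : R -> R) a b M :
  (forall x, Rmin a b <= x <= Rmax a b -> ex_derive h x /\ Rabs (Derive h x) <= M) ->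
  Rabs (h b - h a) <= M * Rabs (b - a).
Proof.
  intros Hh.
  destruct (MVT_gen h a b (Derive h)) as [x [Hx ->]].
  - intros x Hx. apply Derive_correct, Hh. lra.
  - intros x Hx. apply continuity_pt_ex_derive, Hh, Hx.
  - rewrite Rabs_mult. apply Rmult_le_compat_r; [apply Rabs_pos|]. apply Hh, Hx.
Qed.

Lemma C1_on_continuity_2d_pt O g t v : open2 O -> C1_on O g -> O t v ->
  continuity_2d_pt g t v.
Proof.
  intros HO HC Htv.
  (* Only the t-derivative is used: the mean value theorem along the horizontal
     segment, then continuity of [g t] in the second variable. *)
  destruct (HC t v Htv) as [_ [Hgv [Hdt _]]].
  set (M := Rabs (dt g t v) + 1).
  assert (HM : 0 < M) by (unfold M; pose proof (Rabs_pos (dt g t v)); lra).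
  assert (Hball : exists r, 0 < r /\ forall u w, Rabs (u - t) < r -> Rabs (w - v) < r ->
            ex_derive (fun x => g x w) u /\ Rabs (dt g u w) <= M).
  { destruct (HO t v Htv) as [r1 [Hr1 HO1]].
    destruct (Hdt 1 Rlt_0_1) as [r2 [Hr2 Hdt2]].
    exists (Rmin r1 r2). split; [apply Rmin_pos; assumption|].
    intros u w Hu Hw. apply Rmin_Rgt in Hu as [Hu1 Hu2]. apply Rmin_Rgt in Hw as [Hw1 Hw2].
    split; [apply (HC u w (HO1 u w Hu1 Hw1))|].
    pose proof (Hdt2 u w Hu2 Hw2). pose proof (Rabs_triang_inv (dt g u w) (dt g t v)).
    unfold M; lra. }
  destruct Hball as [r [Hr Hball]].
  intros eps.
  destruct (proj1 (continuity_pt_locally _ _) (continuity_pt_ex_derive _ _ Hgv)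
              (pos_div_2 eps)) as [r' Hr'].
  assert (Hr3 : 0 < eps / (2 * M)) by (apply Rdiv_lt_0_compat; [apply cond_pos | lra]).
  exists (mkposreal _ (Rmin_pos _ _ Hr (Rmin_pos _ _ (cond_pos r') Hr3))); simpl.
  intros u w Hu Hw. apply Rmin_Rgt in Hu as [Hu1 Hu2]. apply Rmin_Rgt in Hu2 as [_ Hu3].
  apply Rmin_Rgt in Hw as [Hw1 Hw2]. apply Rmin_Rgt in Hw2 as [Hw2 _].
  assert (Hhoriz : Rabs (g u w - g t w) <= M * Rabs (u - t)).
  { apply (Rabs_sub_le_of_Derive_bound (fun x => g x w)). intros x Hx.
    apply Hball; [|exact Hw1].
    apply Rle_lt_trans with (Rabs (u - t)); [|exact Hu1].
    unfold Rmin, Rmax in Hx. destruct (Rle_dec t u);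
      unfold Rabs; repeat destruct Rcase_abs; lra. }
  assert (Hvert : Rabs (g t w - g t v) < eps / 2) by (apply Hr'; exact Hw2).
  assert (HMu : M * Rabs (u - t) <= eps / 2).
  { apply Rle_trans with (M * (eps / (2 * M))); [apply Rmult_le_compat_l; lra|].
    right. field. lra. }
  replace (g u w - g t v) with ((g u w - g t w) + (g t w - g t v)) by ring.
  pose proof (Rabs_triang (g u w - g t w) (g t w - g t v)). lra.
Qed.

Lemma open2_locally_2d O t v : open2 O -> O t v -> locally_2d O t v.
Proof.
  intros HO Htv. destruct (HO t v Htv) as [r [Hr HOr]].
  exists (mkposreal r Hr). exact HOr.
Qed.

Lemma locally_2d_snd_pos t v : 0 < v -> locally_2d (fun _ w => 0 < w) t v.
Proof.
  intros Hv. exists (mkposreal (v / 2) ltac:(lra)). simpl.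
  intros u w _ Hw. apply Rabs_def2 in Hw. lra.
Qed.

Lemma Rpower_pos v a : 0 < Rpower v a.
Proof. apply exp_pos. Qed.

Lemma Rpower_le_1 v a : 0 < v <= 1 -> 0 <= a -> Rpower v a <= 1.
Proof.
  intros Hv Ha.
  replace 1 with (Rpower 1 a) by (unfold Rpower; rewrite ln_1, Rmult_0_r; apply exp_0).
  apply Rle_Rpower_l; lra.
Qed.

Lemma Rpower_le_base v n : 0 < v <= 1 -> 1 <= n -> Rpower v n <= v.
Proof.
  intros Hv Hn.
  replace n with (1 + (n - 1)) by ring. rewrite Rpower_plus, Rpower_1 by lra.
  pose proof (Rpower_le_1 v (n - 1) Hv ltac:(lra)). nra.
Qed.

Lemma exp_opp_mul_le y : 0 <= y -> exp (- y) * (1 + y) <= 1.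
Proof.
  intros Hy. rewrite exp_Ropp. pose proof (exp_ineq1_le y). pose proof (exp_pos y).
  apply Rmult_le_reg_l with (exp y); [assumption|].
  rewrite <- Rmult_assoc, Rinv_r by lra. lra.
Qed.

Definition peak (c f d n t v : R) : R :=
  c / v * exp (- (f / v ^ 2) * (t + d * Rpower v n) ^ 2).

Definition peak_dt (c f d n t v : R) : R :=
  peak c f d n t v * (- (f / v ^ 2) * (2 * (t + d * Rpower v n))).

Definition peak_dv (c f d n t v : R) : R :=
  - c / v ^ 2 * exp (- (f / v ^ 2) * (t + d * Rpower v n) ^ 2) +
  peak c f d n t v *
    (2 * f / v ^ 3 * (t + d * Rpower v n) ^ 2
     - f / v ^ 2 * (2 * (t + d * Rpower v n)) * (d * (n * Rpower v n / v))).

Lemma is_derive_peak_t c f d n t v : 0 < v ->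
  is_derive (fun x => peak c f d n x v) t (peak_dt c f d n t v).
Proof.
  intros Hv. unfold peak_dt, peak. auto_derive.
  - lra.
  - simpl. unfold Rdiv. field. lra.
Qed.

Lemma is_derive_peak_v c f d n t v : 0 < v ->
  is_derive (fun y => peak c f d n t y) v (peak_dv c f d n t v).
Proof.
  intros Hv. unfold peak_dv, peak, Rpower. auto_derive.
  - repeat split; try lra; nra.
  - simpl. unfold Rdiv. field. lra.
Qed.

Lemma continuity_2d_pt_peak c f d n t v : 0 < v ->
  continuity_2d_pt (peak c f d n) t v.
Proof. intros Hv. unfold peak, Rpower. continuity_2d; try apply pow_nonzero; lra. Qed.

Lemma continuity_2d_pt_peak_dt c f d n t v : 0 < v ->
  continuity_2d_pt (peak_dt c f d n) t v.
Proof. intros Hv. unfold peak_dt, peak, Rpower. continuity_2d; try apply pow_nonzero; lra. Qed.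

Lemma continuity_2d_pt_peak_dv c f d n t v : 0 < v ->
  continuity_2d_pt (peak_dv c f d n) t v.
Proof. intros Hv. unfold peak_dv, peak, Rpower. continuity_2d; try apply pow_nonzero; lra. Qed.

Lemma peak_pos c f d n t v : 0 < c -> 0 < v -> 0 < peak c f d n t v.
Proof.
  intros Hc Hv. apply Rmult_lt_0_compat; [apply Rdiv_lt_0_compat; assumption | apply exp_pos].
Qed.

Lemma peak_le_off_axis c f d n t v a : 0 < c -> 0 < f -> 1 <= n -> 0 < v <= 1 ->
  0 < a <= Rabs t -> Rabs d * v <= a / 2 ->
  peak c f d n t v <= 4 * c * v / (f * a ^ 2).
Proof.
  intros Hc Hf Hn Hv Ha Hdv. unfold peak.
  set (A := t + d * Rpower v n).
  assert (HA : a / 2 <= Rabs A).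
  { pose proof (Rpower_le_base v n Hv Hn). pose proof (Rpower_pos v n).
    pose proof (Rabs_triang_inv t (- (d * Rpower v n))) as Htri.
    replace (t - - (d * Rpower v n)) with A in Htri by (unfold A; ring).
    rewrite Rabs_Ropp, Rabs_mult, (Rabs_pos_eq (Rpower v n)) in Htri by lra.
    pose proof (Rabs_pos d). nra. }
  assert (HA2 : a ^ 2 <= 4 * A ^ 2) by (rewrite <- (pow2_abs A); nra).
  assert (Hv2 : 0 < v ^ 2) by (apply pow_lt; lra).
  set (y := f / v ^ 2 * A ^ 2).
  assert (Hy : y * v ^ 2 = f * A ^ 2) by (unfold y; field; lra).
  assert (Hy0 : 0 <= y) by
    (unfold y; apply Rmult_le_pos; [apply Rlt_le, Rdiv_lt_0_compat | apply pow2_ge_0]; lra).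
  replace (- (f / v ^ 2) * A ^ 2) with (- y) by (unfold y; ring).
  pose proof (exp_opp_mul_le y Hy0). pose proof (exp_pos (- y)).
  assert (HE : exp (- y) * (f * a ^ 2) <= 4 * v ^ 2).
  { assert (exp (- y) * y <= 1) by nra.
    apply Rle_trans with (exp (- y) * (4 * (y * v ^ 2))).
    - rewrite Hy. apply Rmult_le_compat_l; nra.
    - nra. }
  assert (Hfa : 0 < f * a ^ 2) by (apply Rmult_lt_0_compat; [|apply pow_lt]; lra).
  apply (Rle_div_r _ _ _ Hfa).
  replace (c / v * exp (- y) * (f * a ^ 2)) with (c / v * (exp (- y) * (f * a ^ 2))) by ring.
  apply Rle_trans with (c / v * (4 * v ^ 2)).
  - apply Rmult_le_compat_l; [apply Rlt_le, Rdiv_lt_0_compat|]; lra.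
  - right. field. lra.
Qed.

Lemma Rabs_peak_dt_le c f d n t v : 0 < c -> 0 < f -> 0 < v ->
  Rabs (peak_dt c f d n t v) <= 2 * c * (f + 1) / v ^ 2.
Proof.
  intros Hc Hf Hv. unfold peak_dt, peak.
  set (X := (t + d * Rpower v n) / v).
  assert (HX : t + d * Rpower v n = X * v) by (unfold X; field; lra).
  rewrite HX.
  set (y := f * X ^ 2).
  assert (Hy : 0 <= y) by (unfold y; apply Rmult_le_pos; [lra | apply pow2_ge_0]).
  replace (- (f / v ^ 2) * (X * v) ^ 2) with (- y) by (unfold y; field; lra).
  pose proof (exp_opp_mul_le y Hy). pose proof (exp_pos (- y)).
  assert (Hv2 : 0 < v ^ 2) by (apply pow_lt; lra).
  replace (c / v * exp (- y) * (- (f / v ^ 2) * (2 * (X * v))))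
    with (- (2 * c * (f * (exp (- y) * X))) / v ^ 2) by (field; lra).
  unfold Rdiv. rewrite Rabs_mult, Rabs_Ropp, (Rabs_pos_eq (/ v ^ 2))
    by (apply Rlt_le, Rinv_0_lt_compat; lra).
  apply Rmult_le_compat_r; [apply Rlt_le, Rinv_0_lt_compat; lra|].
  rewrite !Rabs_mult, (Rabs_pos_eq 2), (Rabs_pos_eq c), (Rabs_pos_eq f),
    (Rabs_pos_eq (exp (- y))) by lra.
  assert (HfX : f * Rabs X <= (f + 1) * (1 + y)).
  { unfold y. rewrite <- (pow2_abs X). pose proof (Rabs_pos X). set (z := Rabs X) in *. simpl.
    assert (f * z <= f + f * (z * z)).
    { assert (0 <= f * (z * z)) by (apply Rmult_le_pos; nra).
      destruct (Rle_dec z 1).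
      - assert (f * z <= f * 1) by (apply Rmult_le_compat_l; lra). lra.
      - assert (f * z <= f * (z * z)) by (apply Rmult_le_compat_l; nra). lra. }
    nra. }
  apply Rmult_le_compat_l; [lra|]. nra.
Qed.

Lemma peak_axis_linear c f d v : 0 < v ->
  peak c f d 1 0 v = c * exp (- (f * d ^ 2)) / v.
Proof.
  intros Hv. unfold peak. rewrite Rpower_1 by exact Hv.
  replace (- (f / v ^ 2) * (0 + d * v) ^ 2) with (- (f * d ^ 2)) by (field; lra).
  field. lra.
Qed.

Lemma Rabs_peak_axis_sub_le c f d n v : 0 < c -> 0 < f -> 0 < v ->
  Rabs (peak c f d n 0 v - c / v) <= c * f * d ^ 2 * Rpower v (2 * n - 3).
Proof.
  intros Hc Hf Hv. unfold peak.
  set (P := Rpower v n).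
  set (x := f / v ^ 2 * (0 + d * P) ^ 2).
  assert (Hv2 : 0 < v ^ 2) by (apply pow_lt; lra).
  assert (Hx : 0 <= x)
    by (unfold x; apply Rmult_le_pos; [apply Rlt_le, Rdiv_lt_0_compat | apply pow2_ge_0]; lra).
  replace (- (f / v ^ 2) * (0 + d * P) ^ 2) with (- x) by (unfold x; ring).
  assert (Hpow : Rpower v (2 * n - 3) = P ^ 2 / v ^ 3).
  { replace (2 * n - 3) with (n + n + - INR 3) by (simpl; ring).
    rewrite 2!Rpower_plus, Rpower_Ropp, Rpower_pow by exact Hv.
    unfold P, Rdiv. ring. }
  rewrite Hpow.
  replace (c * f * d ^ 2 * (P ^ 2 / v ^ 3)) with (c / v * x) by (unfold x; field; lra).
  pose proof (exp_ineq1_le (- x)). pose proof (exp_opp_mul_le x Hx). pose proof (exp_pos (- x)).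
  assert (Hcv : 0 < c / v) by (apply Rdiv_lt_0_compat; lra).
  replace (c / v * exp (- x) - c / v) with (c / v * (exp (- x) - 1)) by ring.
  apply Rabs_le. split; nra.
Qed.

Lemma peak_axis_expansion c f d n : 0 < c -> 0 < f -> 1 <= n ->
  exists c' K e, 0 < c' /\ 0 <= K /\ 0 < e <= 1 /\
    forall v, 0 < v <= 1 -> Rabs (peak c f d n 0 v - c' / v) * Rpower v (1 - e) <= K.
Proof.
  intros Hc Hf Hn. destruct (Req_dec n 1) as [-> | Hn1].
  - exists (c * exp (- (f * d ^ 2))), 0, (1 / 2).
    split; [apply Rmult_lt_0_compat; [lra | apply exp_pos]|].
    split; [lra|]. split; [lra|].
    intros v Hv. rewrite peak_axis_linear, Rminus_eq_0, Rabs_R0, Rmult_0_l by lra. lra.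
  - set (e := Rmin (1 / 2) (n - 1)).
    assert (He : 0 < e /\ e <= 1 / 2 /\ e <= n - 1)
      by (split; [apply Rmin_pos | split; [apply Rmin_l | apply Rmin_r]]; lra).
    exists c, (c * f * d ^ 2), e.
    assert (HK : 0 <= c * f * d ^ 2) by (apply Rmult_le_pos; [nra | apply pow2_ge_0]).
    split; [exact Hc|]. split; [exact HK|]. split; [lra|].
    intros v Hv.
    apply Rle_trans with (c * f * d ^ 2 * Rpower v (2 * n - 3) * Rpower v (1 - e)).
    + apply Rmult_le_compat_r; [left; apply Rpower_pos | apply Rabs_peak_axis_sub_le; lra].
    + rewrite Rmult_assoc, <- Rpower_plus.
      rewrite <- (Rmult_1_r (c * f * d ^ 2)) at 2.
      apply Rmult_le_compat_l; [exact HK|]. apply Rpower_le_1; lra.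
Qed.

Lemma peak_vanishes_off_axis c f d n t : 0 < c -> 0 < f -> 1 <= n -> t <> 0 ->
  forall eps, 0 < eps -> exists delta, 0 < delta /\
    forall u w, Rabs (u - t) < delta -> 0 < w < delta -> peak c f d n u w < eps.
Proof.
  intros Hc Hf Hn Ht eps Heps.
  set (a := Rabs t / 2).
  assert (Ha : 0 < a) by (unfold a; pose proof (Rabs_pos_lt t Ht); lra).
  assert (Hfa : 0 < f * a ^ 2) by (apply Rmult_lt_0_compat; [|apply pow_lt]; lra).
  set (K := eps * (f * a ^ 2) / (4 * c)).
  assert (HK : 0 < K) by (unfold K; apply Rdiv_lt_0_compat; nra).
  assert (Hq : 0 < a / (2 * (Rabs d + 1)))
    by (pose proof (Rabs_pos d); apply Rdiv_lt_0_compat; lra).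
  exists (Rmin a (Rmin 1 (Rmin (a / (2 * (Rabs d + 1))) K))).
  split; [repeat apply Rmin_pos; lra|].
  intros u w Hu [Hw Hwd].
  apply Rmin_Rgt in Hu as [Hu _].
  apply Rmin_Rgt in Hwd as [_ Hwd]. apply Rmin_Rgt in Hwd as [Hw1 Hwd].
  apply Rmin_Rgt in Hwd as [Hwq HwK].
  assert (Hau : a <= Rabs u).
  { pose proof (Rabs_triang_inv t (t - u)) as Htri.
    replace (t - (t - u)) with u in Htri by ring.
    rewrite <- Rabs_Ropp, Ropp_minus_distr in Hu. unfold a in *. lra. }
  assert (Hdw : Rabs d * w <= a / 2).
  { pose proof (Rabs_pos d).
    assert (w * (2 * (Rabs d + 1)) < a) by (apply (Rlt_div_r w a); [lra | exact Hwq]).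
    nra. }
  apply Rle_lt_trans with (4 * c * w / (f * a ^ 2)); [apply peak_le_off_axis; lra|].
  apply (Rlt_div_l _ _ _ Hfa).
  assert (HwK' : w * (4 * c) < eps * (f * a ^ 2)) by (apply (Rlt_div_r w); [lra | exact HwK]).
  lra.
Qed.

Lemma chi_of_pos c f d n eta t v : 0 < v ->
  chi_of c f d n eta t v = peak c f d n t v + eta t v.
Proof. intros Hv. unfold chi_of, peak. destruct (Rlt_dec 0 v); [reflexivity | lra]. Qed.

Lemma chi_of_nonpos c f d n eta t v : v <= 0 -> chi_of c f d n eta t v = eta t v.
Proof. intros Hv. unfold chi_of. destruct (Rlt_dec 0 v); [lra | reflexivity]. Qed.

Lemma is_derive_chi_of_t c f d n eta t v : 0 < v -> ex_derive (fun x => eta x v) t ->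
  is_derive (fun x => chi_of c f d n eta x v) t (peak_dt c f d n t v + dt eta t v).
Proof.
  intros Hv He.
  apply is_derive_ext with (fun x => peak c f d n x v + eta x v).
  - intros x. symmetry. apply chi_of_pos, Hv.
  - apply (is_derive_plus (fun x => peak c f d n x v) (fun x => eta x v)).
    + apply is_derive_peak_t, Hv.
    + apply Derive_correct, He.
Qed.

Lemma is_derive_chi_of_v c f d n eta t v : 0 < v -> ex_derive (fun y => eta t y) v ->
  is_derive (fun y => chi_of c f d n eta t y) v (peak_dv c f d n t v + dv eta t v).
Proof.
  intros Hv He.
  apply is_derive_ext_loc with (fun y => peak c f d n t y + eta t y).
  - exists (mkposreal (v / 2) ltac:(lra)). intros y Hy.
    change (Rabs (y - v) < v / 2) in Hy. apply Rabs_def2 in Hy.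
    symmetry. apply chi_of_pos. lra.
  - apply (is_derive_plus (fun y => peak c f d n t y) (fun y => eta t y)).
    + apply is_derive_peak_v, Hv.
    + apply Derive_correct, He.
Qed.

Lemma chi_of_C1 c f d n eta O : open2 O -> C1_on O eta ->
  C1_on (fun t v => O t v /\ 0 < v) (chi_of c f d n eta).
Proof.
  intros HO HC t v [Htv Hv].
  destruct (HC t v Htv) as [Het [Hev [Hcdt Hcdv]]].
  assert (Hloc : locally_2d (fun u w => O u w /\ 0 < w) t v)
    by (apply locally_2d_and; [apply open2_locally_2d | apply locally_2d_snd_pos]; assumption).
  split; [eexists; apply is_derive_chi_of_t; assumption|].
  split; [eexists; apply is_derive_chi_of_v; assumption|].
  split; apply cont2_at_iff.
  - apply continuity_2d_pt_ext_loc with (fun u w => peak_dt c f d n u w + dt eta u w).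
    + apply locally_2d_impl with (2 := Hloc), locally_2d_forall. intros u w [Huw Hw].
      symmetry.
      exact (is_derive_unique _ _ _
               (is_derive_chi_of_t c f d n eta u w Hw (proj1 (HC u w Huw)))).
    + apply continuity_2d_pt_plus;
        [apply continuity_2d_pt_peak_dt, Hv | apply cont2_at_iff, Hcdt].
  - apply continuity_2d_pt_ext_loc with (fun u w => peak_dv c f d n u w + dv eta u w).
    + apply locally_2d_impl with (2 := Hloc), locally_2d_forall. intros u w [Huw Hw].
      symmetry.
      exact (is_derive_unique _ _ _
               (is_derive_chi_of_v c f d n eta u w Hw (proj1 (proj2 (HC u w Huw))))).
    + apply continuity_2d_pt_plus;
        [apply continuity_2d_pt_peak_dv, Hv | apply cont2_at_iff, Hcdv].
Qed.

Lemma continuity_2d_pt_chi_of c f d n eta t v : 0 < v -> continuity_2d_pt eta t v ->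
  continuity_2d_pt (chi_of c f d n eta) t v.
Proof.
  intros Hv He.
  apply continuity_2d_pt_ext_loc with (fun u w => peak c f d n u w + eta u w).
  - apply locally_2d_impl with (2 := locally_2d_snd_pos t v Hv), locally_2d_forall.
    intros u w Hw. symmetry. apply chi_of_pos, Hw.
  - apply continuity_2d_pt_plus; [apply continuity_2d_pt_peak, Hv | exact He].
Qed.

Lemma chi_of_cont_at_boundary c f d n eta O t : 0 < c -> 0 < f -> 1 <= n ->
  open2 O -> C1_on O eta -> O t 0 -> t <> 0 ->
  forall eps, 0 < eps -> exists delta, 0 < delta /\ forall u w, 0 <= w ->
    Rabs (u - t) < delta -> Rabs (w - 0) < delta ->
    Rabs (chi_of c f d n eta u w - chi_of c f d n eta t 0) < eps.
Proof.
  intros Hc Hf Hn HO HC Hto Ht eps Heps.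
  destruct (C1_on_continuity_2d_pt O eta t 0 HO HC Hto (pos_div_2 (mkposreal eps Heps)))
    as [[r1 Hr1] Heta]; simpl in Heta.
  destruct (peak_vanishes_off_axis c f d n t Hc Hf Hn Ht (eps / 2) ltac:(lra))
    as [r2 [Hr2 Hpeak]].
  exists (Rmin r1 r2). split; [apply Rmin_pos; assumption|].
  intros u w Hw Hu Hw'.
  apply Rmin_Rgt in Hu as [Hu1 Hu2]. apply Rmin_Rgt in Hw' as [Hw1 Hw2].
  specialize (Heta u w Hu1 Hw1).
  rewrite (chi_of_nonpos c f d n eta t 0) by lra.
  destruct (Rle_lt_dec w 0) as [Hw0 | Hw0].
  - rewrite chi_of_nonpos by exact Hw0. lra.
  - rewrite chi_of_pos by exact Hw0.
    rewrite Rminus_0_r, Rabs_pos_eq in Hw2 by lra.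
    pose proof (Hpeak u w Hu2 (conj Hw0 Hw2)). pose proof (peak_pos c f d n u w Hc Hw0).
    replace (peak c f d n u w + eta u w - eta t 0)
      with (peak c f d n u w + (eta u w - eta t 0)) by ring.
    pose proof (Rabs_triang (peak c f d n u w) (eta u w - eta t 0)).
    rewrite (Rabs_pos_eq (peak c f d n u w)) in * by lra. lra.
Qed.

Definition U_trunc (O : R -> R -> Prop) (t v : R) : Prop :=
  (O t v /\ Rabs t < 1 /\ Rabs v < 1) /\ H2 t v.

Lemma is_U_U_trunc O : open2 O -> O 0 0 -> is_U (U_trunc O).
Proof.
  intros HO HO0.
  exists (fun t v => O t v /\ Rabs t < 1 /\ Rabs v < 1). split; [|split].
  - intros t v [Htv [Ht Hv]]. destruct (HO t v Htv) as [r [Hr HOr]].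
    exists (Rmin r (Rmin (1 - Rabs t) (1 - Rabs v))). split; [repeat apply Rmin_pos; lra|].
    intros t' v' Ht' Hv'.
    apply Rmin_Rgt in Ht' as [Htr Ht']. apply Rmin_Rgt in Ht' as [Ht' _].
    apply Rmin_Rgt in Hv' as [Hvr Hv']. apply Rmin_Rgt in Hv' as [_ Hv'].
    split; [apply HOr; assumption|].
    pose proof (Rabs_triang (t' - t) t). pose proof (Rabs_triang (v' - v) v).
    replace (t' - t + t) with t' in * by ring. replace (v' - v + v) with v' in * by ring.
    lra.
  - split; [exact HO0|]. rewrite Rabs_R0. lra.
  - intros t v. reflexivity.
Qed.

Lemma chi_of_cont_on c f d n eta O : 0 < c -> 0 < f -> 1 <= n ->
  open2 O -> C1_on O eta -> cont_on (Ustar (U_trunc O)) (chi_of c f d n eta).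
Proof.
  intros Hc Hf Hn HO HC t v [[[Htv _] Hv] Htv0] eps Heps. unfold H2 in Hv.
  destruct (Rle_lt_dec v 0) as [Hv0 | Hv0].
  - assert (v = 0) as -> by lra.
    assert (Ht : t <> 0) by tauto.
    destruct (chi_of_cont_at_boundary c f d n eta O t Hc Hf Hn HO HC Htv Ht eps Heps)
      as [delta [Hdelta Hbd]].
    exists delta. split; [exact Hdelta|].
    intros u w [[_ Hw] _] Hu Hw'. apply Hbd; assumption.
  - destruct (continuity_2d_pt_chi_of c f d n eta t v Hv0
                (C1_on_continuity_2d_pt O eta t v HO HC Htv) (mkposreal eps Heps))
      as [[delta Hdelta] Hball].
    exists delta. split; [exact Hdelta|].
    intros u w _ Hu Hw. apply Hball; assumption.
Qed.

Definition nu_of (d t : R) : R := (1 + 2 * Rabs d) / Rabs t.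

Lemma nu_of_pos d t : t <> 0 -> 0 < nu_of d t.
Proof.
  intros Ht. pose proof (Rabs_pos d). pose proof (Rabs_pos_lt t Ht).
  apply Rdiv_lt_0_compat; lra.
Qed.

Lemma inv_nu_of_small d e : 0 < e -> exists delta, 0 < delta /\
  forall t, 0 < Rabs t < delta -> Rabs (/ nu_of d t) < e.
Proof.
  intros He. exists e. split; [exact He|]. intros t [Ht Hte].
  pose proof (Rabs_pos d).
  unfold nu_of. rewrite Rinv_div, Rabs_pos_eq by (apply Rle_div_r; lra).
  apply Rle_lt_trans with (Rabs t); [|exact Hte].
  apply (Rle_div_l (Rabs t) (Rabs t) (1 + 2 * Rabs d)); nra.
Qed.

Lemma peak_le_below_nu c f d n t v : 0 < c -> 0 < f -> 1 <= n -> 0 < Rabs t < 1 ->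
  0 < v < Rabs t / nu_of d t -> peak c f d n t v <= 4 * c / f.
Proof.
  intros Hc Hf Hn Ht [Hv Hvt]. pose proof (Rabs_pos d).
  replace (Rabs t / nu_of d t) with (Rabs t ^ 2 / (1 + 2 * Rabs d)) in Hvt
    by (unfold nu_of; field; lra).
  assert (Hv' : v * (1 + 2 * Rabs d) < Rabs t ^ 2) by (apply (Rlt_div_r v); [lra | exact Hvt]).
  assert (Htt : Rabs t ^ 2 <= Rabs t) by (simpl; nra).
  assert (Ht2 : 0 < Rabs t ^ 2) by (apply pow_lt; lra).
  apply Rle_trans with (4 * c * v / (f * Rabs t ^ 2)); [apply peak_le_off_axis; nra|].
  replace (4 * c * v / (f * Rabs t ^ 2)) with (4 * c / f * (v / Rabs t ^ 2)) by (field; lra).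
  rewrite <- (Rmult_1_r (4 * c / f)) at 2.
  apply Rmult_le_compat_l; [apply Rlt_le, Rdiv_lt_0_compat; lra|].
  apply (Rle_div_l _ _ _ Ht2). nra.
Qed.

Lemma chi_of_le_below_nu c f d n eta O B : 0 < c -> 0 < f -> 1 <= n ->
  (forall t v, O t v -> H2 t v -> Rabs (eta t v) <= B /\ Rabs (dt eta t v) <= B) ->
  forall t v, Ustar (U_trunc O) t v -> t <> 0 -> 0 <= v -> v < Rabs t / nu_of d t ->
    Rabs (chi_of c f d n eta t v) <= 4 * c / f + B.
Proof.
  intros Hc Hf Hn HB t v [[[Htv [Ht1 _]] Hv] _] Ht Hv0 Hvt.
  destruct (HB t v Htv Hv) as [Heta _].
  assert (H4 : 0 < 4 * c / f) by (apply Rdiv_lt_0_compat; lra).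
  destruct (Rle_lt_dec v 0) as [Hvn | Hvp].
  - rewrite chi_of_nonpos by exact Hvn. lra.
  - rewrite chi_of_pos by exact Hvp.
    pose proof (peak_pos c f d n t v Hc Hvp).
    pose proof (peak_le_below_nu c f d n t v Hc Hf Hn
                  (conj (Rabs_pos_lt t Ht) Ht1) (conj Hvp Hvt)).
    pose proof (Rabs_triang (peak c f d n t v) (eta t v)).
    rewrite (Rabs_pos_eq (peak c f d n t v)) in * by lra. lra.
Qed.

Lemma chi_of_axis_expansion c f d n eta O B : 0 < c -> 0 < f -> 1 <= n -> 0 <= B ->
  (forall t v, O t v -> H2 t v -> Rabs (eta t v) <= B /\ Rabs (dt eta t v) <= B) ->
  exists c' K e, 0 < c' /\ 0 < K /\ 0 < e /\ forall v, O 0 v -> 0 < v <= 1 ->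
    Rabs (chi_of c f d n eta 0 v - c' / v) < K / Rpower v (1 - e).
Proof.
  intros Hc Hf Hn HB0 HB.
  destruct (peak_axis_expansion c f d n Hc Hf Hn) as [c' [K [e [Hc' [HK [He Hpeak]]]]]].
  exists c', (K + B + 1), e. split; [exact Hc'|]. split; [lra|]. split; [lra|].
  intros v Hov Hv.
  pose proof (Rpower_pos v (1 - e)) as HQ. pose proof (Rpower_le_1 v (1 - e) Hv ltac:(lra)).
  apply (Rlt_div_r _ _ _ HQ).
  rewrite chi_of_pos by lra.
  replace (peak c f d n 0 v + eta 0 v - c' / v) with ((peak c f d n 0 v - c' / v) + eta 0 v)
    by ring.
  pose proof (Rabs_triang (peak c f d n 0 v - c' / v) (eta 0 v)).
  pose proof (Hpeak v Hv). destruct (HB 0 v Hov ltac:(unfold H2; lra)) as [Heta _].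
  nra.
Qed.

Lemma Rabs_dt_chi_of_lt c f d n eta O B : 0 < c -> 0 < f -> 0 <= B -> C1_on O eta ->
  (forall t v, O t v -> H2 t v -> Rabs (eta t v) <= B /\ Rabs (dt eta t v) <= B) ->
  forall t v, O t v -> 0 < v <= 1 ->
    Rabs (dt (chi_of c f d n eta) t v) < (2 * c * (f + 1) + B + 1) / v ^ 2.
Proof.
  intros Hc Hf HB0 HC HB t v Htv Hv.
  destruct (HC t v Htv) as [Hex _].
  replace (dt (chi_of c f d n eta) t v) with (peak_dt c f d n t v + dt eta t v)
    by (symmetry; apply is_derive_unique, is_derive_chi_of_t; [lra | exact Hex]).
  pose proof (Rabs_peak_dt_le c f d n t v Hc Hf ltac:(lra)).
  destruct (HB t v Htv ltac:(unfold H2; lra)) as [_ Hdeta].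
  assert (Hv2 : 0 < v ^ 2 <= 1) by (split; [apply pow_lt | simpl]; nra).
  assert (HBv : B <= B / v ^ 2) by (apply (Rle_div_r B B (v ^ 2)); nra).
  assert (H1v : 0 < 1 / v ^ 2) by (apply Rdiv_lt_0_compat; lra).
  replace ((2 * c * (f + 1) + B + 1) / v ^ 2)
    with (2 * c * (f + 1) / v ^ 2 + B / v ^ 2 + 1 / v ^ 2) by (field; lra).
  pose proof (Rabs_triang (peak_dt c f d n t v) (dt eta t v)). lra.
Qed.

Lemma chi_of_condition3 c f d n eta O B : 0 < c -> 0 < f -> 1 <= n -> 0 <= B ->
  C1_on O eta ->
  (forall t v, O t v -> H2 t v -> Rabs (eta t v) <= B /\ Rabs (dt eta t v) <= B) ->
  exists c' K1 K2 e, 0 < c' /\ 0 < K1 /\ 0 < K2 /\ 0 < e /\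
    forall t v, Ustar (U_trunc O) t v -> v <> 0 ->
      (Ustar (U_trunc O) 0 v ->
         Rabs (chi_of c f d n eta 0 v - c' / v) < K1 / Rpower v (1 - e)) /\
      Rabs (dt (chi_of c f d n eta) t v) < K2 / v ^ 2.
Proof.
  intros Hc Hf Hn HB0 HC HB.
  destruct (chi_of_axis_expansion c f d n eta O B Hc Hf Hn HB0 HB)
    as [c' [K [e [Hc' [HK [He Haxis]]]]]].
  exists c', K, (2 * c * (f + 1) + B + 1), e.
  split; [exact Hc'|]. split; [exact HK|]. split; [nra|]. split; [exact He|].
  intros t v [[[Htv [_ Hv1]] Hv] _] Hv0. unfold H2 in Hv.
  rewrite Rabs_pos_eq in Hv1 by exact Hv.
  split.
  - intros [[[H0v _] _] _]. apply Haxis; [exact H0v | lra].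
  - apply (Rabs_dt_chi_of_lt c f d n eta O B); auto. lra.
Qed.

Theorem lemma2 (c f d n : R) (eta : R -> R -> R)
  (hc : 0 < c) (hf : 0 < f) (hn : 1 <= n)
  (heta : exists O, open2 O /\ O 0 0 /\ C1_on O eta /\
     exists B, forall t v, O t v -> H2 t v ->
       Rabs (eta t v) <= B /\ Rabs (dt eta t v) <= B) :
  exists omega, 0 < omega /\
  exists U, is_U U /\
  exists nu, Psi1_with omega U (chi_of c f d n eta) nu /\
    (forall e, 0 < e -> exists delta, 0 < delta /\
       forall t, 0 < Rabs t < delta -> Rabs (/ nu t) < e).
Proof.
  destruct heta as [O [HO [HO0 [HC [B HB]]]]].
  assert (HB0 : 0 <= B).
  { destruct (HB 0 0 HO0 (Rle_refl 0)) as [H _]. pose proof (Rabs_pos (eta 0 0)). lra. }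
  exists (4 * c / f + B).
  split; [pose proof (Rdiv_lt_0_compat (4 * c) f ltac:(lra) hf); lra|].
  exists (U_trunc O). split; [apply is_U_U_trunc; assumption|].
  exists (nu_of d). split; [|intros e; apply inv_nu_of_small].
  split; [apply chi_of_cont_on; assumption|].
  split.
  { intros t v [[[[Htv _] Hv] _] Hv0]. unfold H2 in Hv.
    assert (Hvp : 0 < v) by lra.
    exact (chi_of_C1 c f d n eta O HO HC t v (conj Htv Hvp)). }
  split; [intros t; apply nu_of_pos|].
  split; [apply (chi_of_le_below_nu c f d n eta O B); assumption|].
  apply (chi_of_condition3 c f d n eta O B); assumption.
Qed.
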